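(* One has $C^\perp=C^{\perp_{\mathbb{F}}}$ for every $A$-code $C$ if and only if either $m=1$ or $f(x)=x^2+ax-1$ for some $a\in\mathbb{F}$.
   Context: Let $\mathbb{F}$ be a finite field, $f(x)\in\mathbb{F}[x]$ monic of degree $m$, $A=\mathbb{F}[x]/\langle f(x)\rangle$, elements identified with polynomials of degree $<m$. An $A$-code of length $l$ is an $A$-submodule of $A^l$, and $C^\perp=\{a\in A^l:\sum_ia_ic_i=0\ \forall c\in C\}$ is its $A$-dual. Identify $g(x)=\sum_{i=0}^{m-1}a_ix^i\in A$ with $(a_0,\ldots,a_{m-1})\in\mathbb{F}^m$ and $A^l$ with $\mathbb{F}^{lm}$ by concatenation; the $\mathbb{F}$-dual $C^{\perp_{\mathbb{F}}}$ of $C$ is its dual with respect to the standard dot product on $\mathbb{F}^{lm}$, viewed as a subset of $A^l$. *)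

From HB Require Import structures.
From mathcomp Require Import all_boot all_order all_algebra all_field.
Set Implicit Arguments. Unset Strict Implicit. Unset Printing Implicit Defensive.
Import GRing.Theory.
Local Open Scope ring_scope.

(* A = F[x]/<f>, elements identified with polynomials of degree < m = deg f,
   i.e. of size < size f. *)

Definition degf (F : fieldType) (f : {poly F}) : nat := (size f).-1.

Definition inA (F : fieldType) (f : {poly F}) (p : {poly F}) : Prop :=
  (size p < size f)%N.

Definition inAl (F : fieldType) (f : {poly F}) (l : nat)
  (c : 'I_l -> {poly F}) : Prop := forall i, inA f (c i).

Definition mulA (F : fieldType) (f : {poly F}) (a b : {poly F}) : {poly F} :=
  (a * b) %% f.

Definition isACode (F : fieldType) (f : {poly F}) (l : nat)
  (C : ('I_l -> {poly F}) -> Prop) : Prop :=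
  [/\ forall c, C c -> inAl f c,
      C (fun _ => 0),
      forall c d, C c -> C d -> C (fun i => c i + d i)
    & forall a c, inA f a -> C c -> C (fun i => mulA f a (c i))].

Definition dotA (F : fieldType) (f : {poly F}) (l : nat)
  (a c : 'I_l -> {poly F}) : {poly F} :=
  (\sum_(i < l) a i * c i) %% f.

(* standard dot product on F^{lm} after identifying A^l with F^{lm} *)
Definition dotF (F : fieldType) (f : {poly F}) (l : nat)
  (a c : 'I_l -> {poly F}) : F :=
  \sum_(i < l) \sum_(j < degf f) (a i)`_j * (c i)`_j.

Definition Adual (F : fieldType) (f : {poly F}) (l : nat)
  (C : ('I_l -> {poly F}) -> Prop) : ('I_l -> {poly F}) -> Prop :=
  fun a => inAl f a /\ forall c, C c -> dotA f a c = 0.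

Definition Fdual (F : fieldType) (f : {poly F}) (l : nat)
  (C : ('I_l -> {poly F}) -> Prop) : ('I_l -> {poly F}) -> Prop :=
  fun a => inAl f a /\ forall c, C c -> dotF f a c = 0.

From Pilot Require Import Defs.
From HB Require Import structures.
From mathcomp Require Import all_boot all_order all_algebra all_field.
Set Implicit Arguments. Unset Strict Implicit. Unset Printing Implicit Defensive.
Import GRing.Theory.
Local Open Scope ring_scope.

(* The two duals agree exactly when the F-dot product of two elements of A is
   the constant coefficient of their product in A.  Granting this identity, a
   word F-orthogonal to an A-code C is F-orthogonal to every x^j c, so the
   j-th coefficient of its A-inner product with c vanishes for every j.  The
   identity holds for linear f and for f = x^2 + ax - 1, where x^2 = 1 - ax
   in A.  Conversely, (-x, 1) lies in the A-dual of the code {(c, xc)}, and its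
   F-inner product with (x, x^2 mod f) is (x^2 mod f)(0) - 1, which vanishes
   only if deg f = 2 and f(0) = -1. *)

Lemma ord2P (i : 'I_2) : i = ord0 \/ i = ord_max.
Proof. by case: i => -[|[|//]] i2; [left|right]; apply: val_inj. Qed.

Lemma sum_ord2 (V : nmodType) (E : 'I_2 -> V) :
  \sum_(i < 2) E i = E ord0 + E ord_max.
Proof. by rewrite big_ord_recr big_ord1; congr (E _ + _); apply: val_inj. Qed.

Lemma sum_delta (R : nzRingType) n j (E : nat -> R) :
  (j < n)%N -> \sum_(k < n) (k == j :> nat)%:R * E k = E j.
Proof.
move=> jn; rewrite (bigD1 (Ordinal jn)) //= eqxx mul1r big1 ?addr0 // => k.
by rewrite -val_eqE /= => /negbTE ->; rewrite mul0r.
Qed.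

Lemma coef2M_size2 (R : nzRingType) (u v : {poly R}) :
  (size u <= 2)%N -> (size v <= 2)%N -> (u * v)`_2 = u`_1 * v`_1.
Proof.
move=> su sv; rewrite coefM !big_ord_recl big_ord0 /=.
by rewrite [u`_2]nth_default // [v`_2]nth_default // mulr0 mul0r add0r !addr0.
Qed.

Section PolyMod.

Variable F : fieldType.
Implicit Types f p : {poly F}.

Lemma modp_sum f I (r : seq I) (P : pred I) (E : I -> {poly F}) :
  (\sum_(i <- r | P i) E i) %% f = \sum_(i <- r | P i) (E i %% f).
Proof. by elim/big_rec2: _ => [|i p q _ <-]; rewrite ?mod0p ?modpD. Qed.

Lemma modp_monic_sizeE f p n :
  f \is monic -> size f = n.+1 -> (size p <= n.+1)%N -> p %% f = p - p`_n *: f.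
Proof.
move=> /monicP f_lead sf sp.
rewrite -{1}(subrK (p`_n *: f) p) -mul_polyC addrC modp_addl_mul_small //.
rewrite mul_polyC sf ltnS; apply/leq_sizeP => j.
rewrite leq_eqVlt => /predU1P [<-|ltnj].
  by rewrite coefB coefZ; move: f_lead; rewrite /lead_coef sf /= => ->; rewrite mulr1 subrr.
rewrite coefB coefZ [f`_j]nth_default ?sf // mulr0 subr0 nth_default //.
exact: leq_trans sp ltnj.
Qed.

End PolyMod.

Section Quadratic.

Variables (F : fieldType) (a : F).
Let q : {poly F} := 'X^2 + a *: 'X - 1.

Lemma size_quadratic_tail : (size (a *: 'X - 1 : {poly F})%R < 3)%N.
Proof.
rewrite (leq_ltn_trans (size_polyD _ _)) // gtn_max size_polyN size_poly1 andbT.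
by rewrite (leq_ltn_trans (size_scale_leq _ _)) ?size_polyX.
Qed.

Lemma size_quadratic : size q = 3%N.
Proof. by rewrite /q -addrA size_polyDl size_polyXn // size_quadratic_tail. Qed.

Lemma monic_quadratic : q \is monic.
Proof.
by rewrite monicE /q -addrA lead_coefDl ?lead_coefXn // size_polyXn size_quadratic_tail.
Qed.

Lemma coef0_quadratic : q`_0 = -1.
Proof. by rewrite /q !coefD coefN coefXn coefZ coefX coef1 /= mulr0 !add0r. Qed.

End Quadratic.

Definition coef0_mulA_is_dot (F : fieldType) (f : {poly F}) : Prop :=
  forall u v, inA f u -> inA f v ->
  (Defs.mulA f u v)`_0 = \sum_(j < degf f) u`_j * v`_j.

Lemma coef0_mulA_is_dot_linear (F : fieldType) (f : {poly F}) :
  size f = 2%N -> coef0_mulA_is_dot f.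
Proof.
move=> sf u v; rewrite /inA /Defs.mulA /degf sf big_ord1.
move=> /size1_polyC -> /size1_polyC ->.
by rewrite -polyCM modp_small ?coefC // sf ltnS size_polyC_leq1.
Qed.

Lemma coef0_mulA_is_dot_quadratic (F : fieldType) (a : F) :
  coef0_mulA_is_dot ('X^2 + a *: 'X - 1).
Proof.
move=> u v; rewrite /inA /Defs.mulA /degf size_quadratic !ltnS => su sv.
rewrite (modp_monic_sizeE (monic_quadratic a) (size_quadratic a)); last first.
  by rewrite (leq_trans (size_polyMleq _ _)) // -subn1 leq_subLR (leq_add su sv).
rewrite coefD coefN coefZ coef0M coef0_quadratic coef2M_size2 // mulrN1 opprK.
by rewrite big_ord_recl big_ord1.
Qed.

Section Duality.

Variables (F : fieldType) (f : {poly F}).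

Lemma inA_Xn j : (j < degf f)%N -> inA f 'X^j.
Proof. by rewrite /inA size_polyXn -ltn_predRL. Qed.

Lemma dotA_mulA l (a c : 'I_l -> {poly F}) b :
  dotA f a (fun i => Defs.mulA f b (c i)) = Defs.mulA f b (dotA f a c).
Proof.
rewrite /dotA /Defs.mulA modp_mul mulr_sumr !modp_sum.
by apply: eq_bigr => i _; rewrite modp_mul mulrCA.
Qed.

Hypotheses (f_neq0 : f != 0) (f_dot : coef0_mulA_is_dot f).

Lemma dotF_dotA l (a c : 'I_l -> {poly F}) :
  inAl f a -> inAl f c -> dotF f a c = (dotA f a c)`_0.
Proof.
move=> ina inc; rewrite /dotA modp_sum coef_sum.
by apply: eq_bigr => i _; rewrite f_dot.
Qed.

Lemma coef0_mulA_Xn j s :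
  (j < degf f)%N -> inA f s -> (Defs.mulA f 'X^j s)`_0 = s`_j.
Proof.
move=> jf ins; rewrite f_dot //; last exact: inA_Xn.
by under eq_bigr do rewrite coefXn; rewrite sum_delta.
Qed.

Lemma Adual_Fdual l (C : ('I_l -> {poly F}) -> Prop) a :
  isACode f C -> Adual f C a -> Fdual f C a.
Proof.
move=> [inC _ _ _] [ina orth]; split=> // c Cc.
by rewrite dotF_dotA ?orth ?coef0 //; exact: inC.
Qed.

Lemma Fdual_Adual l (C : ('I_l -> {poly F}) -> Prop) a :
  isACode f C -> Fdual f C a -> Adual f C a.
Proof.
move=> [inC _ _ mulC] [ina orth]; split=> // c Cc.
have s_red : inA f (dotA f a c) by rewrite /inA ltn_modp.
apply/polyP => k; rewrite coef0.
have [kf|fk] := ltnP k (degf f).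
  have Cc' := mulC _ _ (inA_Xn kf) Cc.
  by rewrite -(coef0_mulA_Xn kf s_red) -dotA_mulA -dotF_dotA ?orth //; exact: inC.
by rewrite nth_default // (leq_trans _ fk) // -ltnS (ltn_predK s_red).
Qed.

End Duality.

Definition word2 (R : Type) (x y : R) (i : 'I_2) : R :=
  if val i == 0%N then x else y.

Section MulGraph.

Variables (F : fieldType) (f : {poly F}).

Definition mul_graph (b : {poly F}) (c : 'I_2 -> {poly F}) : Prop :=
  inA f (c ord0) /\ c ord_max = Defs.mulA f (c ord0) b.

Lemma isACode_mul_graph b : f != 0 -> isACode f (mul_graph b).
Proof.
move=> f_neq0; split.
- move=> c [c0 c1] i; have [->|->] := ord2P i => //.
  by rewrite c1 /inA ltn_modp.
- by rewrite /mul_graph /inA /Defs.mulA size_poly0 size_poly_gt0 mul0r mod0p.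
- move=> c d [c0 c1] [d0 d1]; split; last by rewrite c1 d1 /Defs.mulA mulrDl modpD.
  by rewrite /inA (leq_ltn_trans (size_polyD _ _)) // gtn_max c0 d0.
- move=> a c _ [c0 c1]; split; first by rewrite /inA ltn_modp.
  by rewrite c1 /Defs.mulA modp_mul [in RHS]mulrC modp_mul mulrA mulrC.
Qed.

Lemma Adual_mul_graph b :
  (1 < size f)%N -> inA f b -> Adual f (mul_graph b) (word2 (- b) 1).
Proof.
move=> sf inb; split.
  by move=> i; have [->|->] := ord2P i; rewrite /inA ?size_polyN ?size_poly1.
move=> c [c0 c1]; rewrite /dotA sum_ord2 /= c1 /Defs.mulA mul1r.
by rewrite modpD modp_id mulNr modpN mulrC addNr.
Qed.

Lemma Fdual_mul_graphX :
  (2 < size f)%N -> Fdual f (mul_graph 'X) (word2 (- 'X) 1) -> ('X^2 %% f)`_0 = 1.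
Proof.
move=> sf [_ orth].
have degf_gt1 : (1 < degf f)%N by rewrite /degf -ltn_predRL in sf.
have /orth : mul_graph 'X (word2 'X ('X^2 %% f)).
  by rewrite /mul_graph /Defs.mulA /inA size_polyX expr2; split => //; exact: ltnW.
rewrite /dotF sum_ord2 /word2 /=.
under eq_bigr do rewrite coefN coefX mulNr.
under [X in _ + X]eq_bigr do rewrite coef1.
rewrite sumrN (sum_delta (fun k => (k == 1%N)%:R)) // sum_delta ?(ltnW degf_gt1) //=.
by rewrite mulr1n addrC => /eqP; rewrite subr_eq0 => /eqP.
Qed.

End MulGraph.

Lemma monic_coef0_modXn2 (F : fieldType) (f : {poly F}) :
  f \is monic -> (2 < size f)%N -> ('X^2 %% f)`_0 = 1 ->
  exists a : F, f = 'X^2 + a *: 'X - 1.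
Proof.
move=> f_monic sf; have [f_lt3|f_gt3|f3] := ltngtP (size f) 3.
- by rewrite ltnS leqNgt sf in f_lt3.
- by rewrite modp_small ?size_polyXn // coefXn => /eqP; rewrite eq_sym oner_eq0.
rewrite (modp_monic_sizeE f_monic f3) ?size_polyXn //.
rewrite coefD coefN coefZ !coefXn /= mul1r sub0r => /eqP.
rewrite eqr_oppLR => /eqP f0.
exists f`_1; apply/polyP => -[|[|[|k]]];
  rewrite !coefD coefN coefXn coefZ coefX coef1 /= ?mulr0 ?mulr1 ?add0r ?addr0 ?subr0 //.
- by move/monicP: f_monic; rewrite /lead_coef f3.
- by rewrite nth_default ?f3 // oppr0.
Qed.

Theorem mainTheorem15 (F : finFieldType) (f : {poly F})
  (f_monic : f \is monic) (f_nonconst : (1 < size f)%N) :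
  (forall (l : nat) (C : ('I_l -> {poly F}) -> Prop),
      isACode f C -> forall a, Adual f C a <-> Fdual f C a)
  <->
  (degf f = 1%N \/ exists a : F, f = 'X^2 + a *: 'X - 1).
Proof.
have f_neq0 : f != 0 by exact: monic_neq0.
split=> [dual_eq|f_shape l C C_code a].
  have [|degf_neq1] := eqVneq (degf f) 1%N; first by left.
  have sf : (2 < size f)%N.
    by move: f_nonconst degf_neq1; rewrite /degf; case: (size f) => [|[|[|]]].
  have inX : inA f 'X by rewrite /inA size_polyX.
  have /(dual_eq _ _ (isACode_mul_graph 'X f_neq0)) /(Fdual_mul_graphX sf) :=
    Adual_mul_graph f_nonconst inX.
  by right; apply: monic_coef0_modXn2.
have f_dot : coef0_mulA_is_dot f.
  case: f_shape => [degf1|[b ->]]; last exact: coef0_mulA_is_dot_quadratic.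
  apply: coef0_mulA_is_dot_linear.
  by move: degf1; rewrite /degf; case: (size f) => [|[|[|]]].
by split; [apply: Adual_Fdual | apply: Fdual_Adual].
Qed.
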